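(* Let $\mathcal X$ be a finite set, $\mathcal H$ a $d$-dimensional Hilbert space, and $\{x\mapsto\rho^B_x(\theta)\}_{\theta\in\Theta}$ a compound cq-channel with $\rho^B_x(\theta)\in\mathcal D(\mathcal H)$ and $\Theta$ an arbitrary index set. There is a constant $K>0$ depending only on $d$ such that for every $T\in\mathbb N$ there exists a compound cq-channel $\{x\mapsto\rho^B_x(\widetilde\theta)\}_{\widetilde\theta\in\widetilde\Theta}$ with $\rho^B_x(\widetilde\theta)\in\mathcal D(\mathcal H)$ such that: (1) $|\widetilde\Theta|\le K^{|\mathcal X|}T^{6|\mathcal X|d^2}$; (2) for every $\theta\in\Theta$ there is $\widetilde\theta\in\widetilde\Theta$ such that for all $\mathbf x\in\mathcal X^T$, $\|\rho^{\mathbf B}_{\mathbf x}(\theta)-\rho^{\mathbf B}_{\mathbf x}(\widetilde\theta)\|_1\le T^{-5}$; (3) for every PMF $P_X$ on $\mathcal X$, $\min_{\widetilde\theta\in\widetilde\Theta}I(P_X,\rho^B_x(\widetilde\theta))\ge\inf_{\theta\in\Theta}I(P_X,\rho^B_x(\theta))-2T^{-6}\log(T^6d)$.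
   Context: For $\mathbf x=(x_1,\dots,x_T)$, $\rho^{\mathbf B}_{\mathbf x}(\theta)=\rho^B_{x_1}(\theta)\otimes\cdots\otimes\rho^B_{x_T}(\theta)$. $\|X\|_1=\operatorname{tr}\sqrt{X^\dagger X}$. $I(P_X,\rho_x)=H(\sum_xP_X(x)\rho_x)-\sum_xP_X(x)H(\rho_x)$ is the Holevo information, $H$ the von Neumann entropy. *)

From HB Require Import structures.
From mathcomp Require Import all_boot all_order all_algebra.
From mathcomp Require Import complex.
From mathcomp Require Import classical_sets boolp reals exp.
Set Implicit Arguments. Unset Strict Implicit. Unset Printing Implicit Defensive.
Import Order.TTheory GRing.Theory Num.Theory.
Local Open Scope ring_scope.

Section QuantumDefs.
Variable R : realType.
Local Notation C := (R[i]).

Definition adjmx {m n : nat} (A : 'M[C]_(m, n)) : 'M[C]_(n, m) :=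
  (map_mx Num.conj A)^T.

Definition unitarymx {n : nat} (U : 'M[C]_n) : Prop :=
  U *m adjmx U = 1%:M.

Definition spectrum_of {n : nat} (A : 'M[C]_n) (lam : 'rV[R]_n) : Prop :=
  exists U : 'M[C]_n, unitarymx U /\
    A = U *m diag_mx (map_mx (fun r : R => (r%:C)%C) lam) *m adjmx U.

(* a chosen eigenvalue vector (meaningful for Hermitian A, where it exists) *)
Definition eigvals {n : nat} (A : 'M[C]_n) : 'rV[R]_n :=
  xget 0 (spectrum_of A).

(* positive semidefinite (over C this entails Hermitian) *)
Definition psdmx {n : nat} (A : 'M[C]_n) : Prop :=
  forall v : 'cV[C]_n, 0 <= (adjmx v *m A *m v) 0 0.

Definition density {n : nat} (A : 'M[C]_n) : Prop :=
  psdmx A /\ \tr A = 1.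

(* von Neumann entropy H(A) = - tr (A log A) = - sum_i l_i ln l_i  (ln 0 = 0) *)
Definition vN_entropy {n : nat} (A : 'M[C]_n) : R :=
  - \sum_(i < n) eigvals A 0 i * ln (eigvals A 0 i).

Definition trnorm {n : nat} (X : 'M[C]_n) : R :=
  \sum_(i < n) Num.sqrt (eigvals (adjmx X *m X) 0 i).

Definition holevo {X : finType} {d : nat} (P : X -> R) (rho : X -> 'M[C]_d) : R :=
  vN_entropy (\sum_(x : X) (P x)%:C *: rho x)%C
  - \sum_(x : X) P x * vN_entropy (rho x).

Definition pmf {X : finType} (P : X -> R) : Prop :=
  (forall x, 0 <= P x) /\ \sum_(x : X) P x = 1.

(* T-fold tensor product rho_{x_1} (x) ... (x) rho_{x_T}, as a matrix indexed by
   the basis {ffun 'I_T -> 'I_d} of (C^d)^{(x) T} (of cardinality d^T) *)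
Definition tensor_state {X : finType} {d T : nat} (rho : X -> 'M[C]_d)
  (x : 'I_T -> X) : 'M[C]_(#|{ffun 'I_T -> 'I_d}|) :=
  \matrix_(i, j)
    let a : {ffun 'I_T -> 'I_d} := enum_val i in
    let b : {ffun 'I_T -> 'I_d} := enum_val j in
    \prod_(t < T) rho (x t) (a t) (b t).

End QuantumDefs.

(* Quantize, on a grid of mesh 1/M with M = (2d²+1)T⁶, the d² real coordinates
   that determine a Hermitian matrix (real parts on and above the diagonal,
   imaginary parts below) of every ρ_x(θ), and keep one θ per attained cell:
   there are at most (2M+1)^(d²|X|) cells, and states in the same cell are
   entrywise 2/M-close.  Entrywise closeness survives T-fold tensor powers in
   trace norm.  By duality ‖D‖₁ ≤ b as soon as |tr (D W)| ≤ b for every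
   contraction W.  Telescoping A_1⊗…⊗A_T − B_1⊗…⊗B_T into T products with a
   single factor A_t − B_t, and writing each density matrix as a convex
   combination of rank-one terms v v† with |v| ≤ 1 and A_t − B_t as
   Σ_ij (A_t − B_t)_ij e_i e_j†, every such product paired with W is a
   combination of values w† W v with |v|, |w| ≤ 1; this gives
   ‖A^⊗ − B^⊗‖₁ ≤ Σ_t Σ_ij |(A_t − B_t)_ij| ≤ 2d²T/M ≤ T⁻⁵.  The kept states
   belong to the original family, so their Holevo information is at least the
   infimum, which is finite since Holevo information is at least −d. *)

From Pilot Require Import Defs.
From HB Require Import structures.
From mathcomp Require Import all_boot all_order all_algebra.
From mathcomp Require Import complex.
From mathcomp Require Import classical_sets boolp reals exp.
From mathcomp Require Import ring lra zify.
Set Implicit Arguments. Unset Strict Implicit. Unset Printing Implicit Defensive.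
Import Order.TTheory GRing.Theory Num.Theory.
Local Open Scope ring_scope.

Section Quantum.
Variable R : realType.
Local Notation C := R[i].
Local Notation RC := (fun r : R => (r%:C)%C).

Lemma mxBE m n (A B : 'M[C]_(m, n)) i j : (A - B) i j = A i j - B i j.
Proof. by rewrite !mxE. Qed.

Lemma RC_ge0 (r : R) : (0 <= r%:C%C :> C) = (0 <= r).
Proof. exact: lecR 0 r. Qed.

Lemma adjmxE m n (A : 'M[C]_(m, n)) i j : adjmx A i j = (A j i)^*.
Proof. by rewrite !mxE. Qed.

Lemma adjmxK m n (A : 'M[C]_(m, n)) : adjmx (adjmx A) = A.
Proof. by apply/matrixP => i j; rewrite !adjmxE conjCK. Qed.

Lemma adjmxM m n p (A : 'M[C]_(m, n)) (B : 'M[C]_(n, p)) :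
  adjmx (A *m B) = adjmx B *m adjmx A.
Proof. by rewrite /adjmx map_mxM trmx_mul. Qed.

Lemma adjmxD m n (A B : 'M[C]_(m, n)) : adjmx (A + B) = adjmx A + adjmx B.
Proof. by apply/matrixP => i j; rewrite !mxE rmorphD. Qed.

Lemma adjmxB m n (A B : 'M[C]_(m, n)) : adjmx (A - B) = adjmx A - adjmx B.
Proof. by apply/matrixP => i j; rewrite !mxE rmorphB. Qed.

Lemma adjmxZ m n a (A : 'M[C]_(m, n)) : adjmx (a *: A) = a^* *: adjmx A.
Proof. by apply/matrixP => i j; rewrite !mxE rmorphM. Qed.

Lemma adjmx1 n : adjmx (1%:M : 'M[C]_n) = 1%:M.
Proof. by apply/matrixP => i j; rewrite !mxE eq_sym rmorph_nat. Qed.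

Lemma adjmx_delta m n (i : 'I_m) (j : 'I_n) :
  adjmx (delta_mx i j : 'M[C]_(m, n)) = delta_mx j i.
Proof. by apply/matrixP => a b; rewrite !mxE andbC rmorph_nat. Qed.

Lemma adjmx_diag_real n (lam : 'rV[R]_n) :
  adjmx (diag_mx (map_mx RC lam)) = diag_mx (map_mx RC lam).
Proof.
apply/matrixP => i j; rewrite !mxE eq_sym rmorphMn.
by case: eqP => [->|_]; rewrite ?mulr0n ?mulr1n //; exact: conjc_real.
Qed.

Lemma unitarymx_adjK n (U : 'M[C]_n) : Defs.unitarymx U -> adjmx U *m U = 1%:M.
Proof. exact: mulmx1C. Qed.

Lemma cV_normE n (v : 'cV[C]_n) : (adjmx v *m v) 0 0 = \sum_i `|v i 0| ^+ 2.
Proof. by rewrite mxE; apply: eq_bigr => i _; rewrite adjmxE mulrC -normCK. Qed.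

Definition mxform n (A : 'M[C]_n) (u w : 'cV[C]_n) : C := (adjmx u *m A *m w) 0 0.

Lemma mxformDl n (A : 'M[C]_n) u1 u2 w :
  mxform A (u1 + u2) w = mxform A u1 w + mxform A u2 w.
Proof. by rewrite /mxform adjmxD !mulmxDl mxE. Qed.

Lemma mxformDr n (A : 'M[C]_n) u w1 w2 :
  mxform A u (w1 + w2) = mxform A u w1 + mxform A u w2.
Proof. by rewrite /mxform !mulmxDr mxE. Qed.

Lemma mxformZl n (A : 'M[C]_n) a u w : mxform A (a *: u) w = a^* * mxform A u w.
Proof. by rewrite /mxform adjmxZ -!scalemxAl mxE. Qed.

Lemma mxformZr n (A : 'M[C]_n) a u w : mxform A u (a *: w) = a * mxform A u w.
Proof. by rewrite /mxform -!scalemxAr mxE. Qed.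

Lemma mxform_delta n (A : 'M[C]_n) i j :
  mxform A (delta_mx i 0) (delta_mx j 0) = A i j.
Proof. by rewrite /mxform adjmx_delta -rowE -colE !mxE. Qed.

(* Polarization: v† A v is real for v = e_i + a e_j with a = 1 and a = i. *)
Lemma psdmx_herm n (A : 'M[C]_n) : psdmx A -> forall i j, (A j i)^* = A i j.
Proof.
move=> psdA i j; pose e k : 'cV[C]_n := delta_mx k 0.
have form_real u : (mxform A u u)^* = mxform A u u by apply/CrealP/ger0_real/psdA.
have diag_real k : (A k k)^* = A k k by rewrite -mxform_delta form_real.
set x := A i j; set y := A j i.
have cross a : a^* * x^* + a * y^* = a * x + a^* * y.
  have := form_real (e i + a *: e j).
  rewrite !(mxformDl, mxformDr, mxformZl, mxformZr, mxform_delta) -/x -/y.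
  rewrite !(rmorphD, rmorphM) /= conjCK !diag_real => /eqP.
  rewrite -subr_eq0 => /eqP E; apply/eqP; rewrite -subr_eq0; apply/eqP.
  by rewrite -{}E; ring.
have c1 := cross 1; have ci := cross 'i; rewrite conjC1 in c1; rewrite conjCi in ci.
suff : (y^* - x) *+ 2 = 0 by move/eqP; rewrite mulrn_eq0 subr_eq0 => /eqP.
(* c1 - i ci, plus a multiple of 1 + i^2 = 0 *)
have -> : (y^* - x) *+ 2 = (1 * x^* + 1 * y^* - (1 * x + 1 * y))
    - 'i * (- 'i * x^* + 'i * y^* - ('i * x + - 'i * y))
    - (1 + 'i ^+ 2) * (x^* - y^* + x - y) by ring.
by rewrite c1 ci sqrCi !subrr; ring.
Qed.

Lemma psdmx_adj n (A : 'M[C]_n) : psdmx A -> adjmx A = A.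
Proof. by move=> psdA; apply/matrixP => i j; rewrite adjmxE psdmx_herm. Qed.

Lemma adjmx_conj_diag n (A U : 'M[C]_n) i :
  (adjmx U *m A *m U) i i = (adjmx (col i U) *m A *m col i U) 0 0.
Proof.
rewrite !mxE; apply: eq_bigr => k _; rewrite !mxE; congr (_ * _).
by apply: eq_bigr => l _; rewrite !mxE.
Qed.

Lemma density_spectral n (A : 'M[C]_n) : density A ->
  exists (Q : 'M[C]_n) (sp : 'rV[C]_n),
  [/\ Q *m adjmx Q = 1%:M, forall k, 0 <= sp 0 k, \sum_k sp 0 k = 1 &
      A = adjmx Q *m diag_mx sp *m Q].
Proof.
move=> [psdA trA].
have adj_tstar m k (M : 'M[C]_(m, k)) : map_mx Num.conj M^T = adjmx M.
  by rewrite /adjmx map_trmx.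
have /orthomx_spectralP : A \is normalmx.
  by apply/normalmxP; rewrite adj_tstar psdmx_adj.
rewrite invmx_unitary ?spectral_unitarymx // adj_tstar.
have /unitarymxP := spectral_unitarymx A; rewrite adj_tstar.
set Q := spectralmx A; set sp := spectral_diag A => QU AE.
exists Q, sp; split => //.
- move=> k; have := psdA (col k (adjmx Q)); rewrite -adjmx_conj_diag adjmxK.
  by rewrite {1}AE !mulmxA QU mul1mx -mulmxA QU mulmx1 mxE eqxx mulr1n.
- by rewrite -trA {1}AE mxtrace_mulC mulmxA QU mul1mx mxtrace_diag.
Qed.

Definition rank1_decomp (K : finType) n (A : 'M[C]_n) (c : K -> C)
    (p q : K -> 'I_n -> C) : Prop :=
  [/\ forall i j, A i j = \sum_k c k * p k i * (q k j)^*,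
      forall k, \sum_i `|p k i| ^+ 2 <= 1 &
      forall k, \sum_i `|q k i| ^+ 2 <= 1].

Lemma sum_pair_diag n (f : 'I_n -> C) :
  \sum_(k : 'I_n * 'I_n) (k.1 == k.2)%:R * f k.1 = \sum_l f l.
Proof.
rewrite -(pair_bigA _ (fun a b => (a == b)%:R * f a)); apply: eq_bigr => a _ /=.
rewrite (bigD1 a) //= eqxx mul1r big1 ?addr0 // => b.
by rewrite eq_sym => /negbTE ->; rewrite mul0r.
Qed.

(* Indexed by pairs, like the entrywise decomposition of [entry_rank1_decomp],
   so that both kinds of factors fit in one tensor product. *)
Lemma density_rank1_decomp n (A : 'M[C]_n) : density A ->
  exists (c : 'I_n * 'I_n -> C) (p : 'I_n * 'I_n -> 'I_n -> C),
    rank1_decomp A c p p /\ \sum_k `|c k| = 1.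
Proof.
move=> densA; have [Q [sp [QU sp_ge0 sp_sum ->]]] := density_spectral densA.
have row_norm l : \sum_i `|(Q l i)^*| ^+ 2 = 1.
  have := congr1 (fun M : 'M[C]_n => M l l) QU; rewrite /= !mxE eqxx mulr1n => <-.
  by apply: eq_bigr => i _; rewrite adjmxE norm_conjC normCK.
exists (fun k => (k.1 == k.2)%:R * sp 0 k.1), (fun k i => (Q k.1 i)^*).
split; first split=> [i j|k|k]; rewrite ?row_norm //.
- under eq_bigr do rewrite conjCK -!mulrA.
  rewrite (sum_pair_diag (fun l => sp 0 l * ((Q l i)^* * Q l j))) mxE.
  by apply: eq_bigr => l _; rewrite mul_mx_diag !mxE; ring.
- under eq_bigr do rewrite normrM ger0_norm ?ler0n //.
  rewrite (sum_pair_diag (fun l => `|sp 0 l|)) -sp_sum.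
  by apply: eq_bigr => l _; rewrite ger0_norm.
Qed.

Lemma density_entry_le1 n (A : 'M[C]_n) : density A -> forall i j, `|A i j| <= 1.
Proof.
move=> /density_rank1_decomp[c [p [[Ac p_le1 _] c_sum]]] i j.
have p_entry_le1 k l : `|p k l| <= 1.
  rewrite -(@expr_le1 _ 2) //; apply: le_trans (p_le1 k).
  by rewrite (bigD1 l) //= lerDl sumr_ge0 // => ? _; apply: exprn_ge0.
rewrite Ac -c_sum; apply: le_trans (ler_norm_sum _ _ _) _; apply: ler_sum => k _.
rewrite !normrM norm_conjC -mulrA ler_piMr //.
exact: mulr_ile1.
Qed.

Lemma spectrum_of_psdmx n (A : 'M[C]_n) lam : psdmx A -> spectrum_of A lam ->
  (forall i, 0 <= lam 0 i) /\ (\sum_i lam 0 i)%:C%C = \tr A.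
Proof.
move=> psdA [U [UU AE]]; have UU' := unitarymx_adjK UU.
split.
  move=> i; have := psdA (col i U); rewrite -adjmx_conj_diag.
  rewrite AE !mulmxA UU' mul1mx -mulmxA UU' mulmx1 !mxE eqxx mulr1n.
  by rewrite RC_ge0.
rewrite AE mxtrace_mulC mulmxA UU' mul1mx mxtrace_diag.
by rewrite (@rmorph_sum _ _ (complex.real_complex R)); apply: eq_bigr => i _; rewrite mxE.
Qed.

(* [eigvals] falls back to [0] when [A] has no spectral decomposition. *)
Lemma density_eigvals n (A : 'M[C]_n) : density A ->
  forall i, 0 <= eigvals A 0 i <= 1.
Proof.
move=> [psdA trA] i; rewrite /eigvals.
have [ex|nex] := pselect (exists lam, spectrum_of A lam); last first.
  by rewrite xgetPN ?mxE ?lexx ?ler01 // => lam Alam; apply: nex; exists lam.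
have := xgetPex 0 ex; set lam := xget _ _ => /(spectrum_of_psdmx psdA)[lam_ge0].
rewrite trA -[1]/(1%:C%C) => /(congr1 (@complex.Re R)) /= lam_sum.
rewrite lam_ge0 -lam_sum (bigD1 i) //= lerDl.
by apply: sumr_ge0 => j _; apply: lam_ge0.
Qed.

Lemma xlnx_bounds (x : R) : 0 <= x <= 1 -> 0 <= - (x * ln x) <= 1.
Proof.
move=> /andP[x_ge0 x_le1]; rewrite oppr_ge0 mulr_ge0_le0 ?ln_le0 //=.
have [->|x_neq0] := eqVneq x 0; first by rewrite mul0r oppr0.
have x_gt0 : 0 < x by rewrite lt_def x_neq0.
have ln_le : ln x^-1 <= x^-1 - 1.
  have := @le_ln1Dx R (x^-1 - 1); rewrite [1 + _]addrC subrK; apply.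
  by rewrite ltrBrDl addrN invr_gt0.
rewrite lnV ?posrE // in ln_le.
rewrite -mulrN (le_trans (ler_wpM2l x_ge0 ln_le)) // mulrBr mulfV ?gt_eqF //.
by rewrite mulr1 lerBlDr lerDl.
Qed.

Lemma vN_entropy_bounds n (A : 'M[C]_n) : density A -> 0 <= vN_entropy A <= n%:R.
Proof.
move=> /density_eigvals ev; rewrite /vN_entropy -sumrN.
rewrite -[n in n%:R]card_ord -sumr_const.
by apply/andP; split; [apply: sumr_ge0 | apply: ler_sum] => i _;
  have /andP[] := xlnx_bounds (ev i).
Qed.

Lemma density_convex (X : finType) n (P : X -> R) (rho : X -> 'M[C]_n) :
  pmf P -> (forall x, density (rho x)) -> density (\sum_x (P x)%:C%C *: rho x).
Proof.
move=> [P_ge0 P_sum] dens; split.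
  move=> v; rewrite mulmx_sumr mulmx_suml summxE; apply: sumr_ge0 => x _.
  rewrite -scalemxAr -scalemxAl mxE mulr_ge0 ?RC_ge0 //.
  exact: (dens x).1.
rewrite raddf_sum /= -[1]/(1%:C%C) -P_sum (@rmorph_sum _ _ (complex.real_complex R)).
by apply: eq_bigr => x _; rewrite mxtraceZ (dens x).2 mulr1.
Qed.

Lemma holevo_ge (X : finType) n (P : X -> R) (rho : X -> 'M[C]_n) :
  pmf P -> (forall x, density (rho x)) -> - n%:R <= holevo P rho.
Proof.
move=> PP dens; rewrite /holevo -sub0r; apply: lerB.
  by have /andP[] := vN_entropy_bounds (density_convex PP dens).
apply: (le_trans (y := \sum_x P x * n%:R)); last by rewrite -mulr_suml PP.2 mul1r.
apply: ler_sum => x _; apply: ler_wpM2l; first exact: PP.1.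
by have /andP[] := vN_entropy_bounds (dens x).
Qed.

Lemma holevo_ge_inf (X : finType) (Theta : Type) n (P : X -> R)
    (rho : Theta -> X -> 'M[C]_n) :
  pmf P -> (forall th x, density (rho th x)) ->
  forall th, inf [set holevo P (rho th) | th in [set: Theta]] <= holevo P (rho th).
Proof.
move=> PP dens th; apply: ge_inf; last by exists th.
by exists (- n%:R) => _ [th' _ <-]; exact: holevo_ge.
Qed.

Definition contraction n (W : 'M[C]_n) : Prop :=
  forall v : 'cV[C]_n, (adjmx (W *m v) *m (W *m v)) 0 0 <= (adjmx v *m v) 0 0.

Lemma cV_norm_ge0 n (v : 'cV[C]_n) : 0 <= (adjmx v *m v) 0 0.
Proof. by rewrite cV_normE sumr_ge0 // => i _; apply: exprn_ge0. Qed.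

Lemma contraction0 n : contraction (0 : 'M[C]_n).
Proof. by move=> v; rewrite mul0mx mulmx0 mxE cV_norm_ge0. Qed.

Lemma partial_isometry_contraction n (U Y : 'M[C]_n) :
  adjmx U *m U = 1%:M -> Y *m (adjmx Y *m Y) = Y -> contraction (U *m adjmx Y).
Proof.
move=> UU YY v; set E := Y *m adjmx Y.
have EE : E *m E = E by rewrite /E mulmxA -[Y *m _ *m Y]mulmxA YY.
have E_adj : adjmx E = E by rewrite /E adjmxM adjmxK.
have -> : adjmx (U *m adjmx Y *m v) *m (U *m adjmx Y *m v) = adjmx v *m E *m v.
  by rewrite !adjmxM adjmxK !mulmxA -[adjmx v *m Y *m adjmx U *m U]mulmxA UU mulmx1.
have := cV_norm_ge0 ((1%:M - E) *m v).
rewrite adjmxM adjmxB adjmx1 E_adj mulmxA -(mulmxA (adjmx v)) mulmxBl mul1mx.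
rewrite [E *m (_ - _)]mulmxBr mulmx1 EE subrr subr0 mulmxBr mulmx1 mulmxBl.
by rewrite mxBE subr_ge0.
Qed.

Lemma diag_real_mul n (a b : 'rV[R]_n) :
  diag_mx (map_mx RC a) *m diag_mx (map_mx RC b) =
  diag_mx (map_mx RC (\row_i (a 0 i * b 0 i))).
Proof.
rewrite mulmx_diag; congr diag_mx.
by apply/rowP => i; rewrite !mxE rmorphM.
Qed.

Lemma invr_sqrt_mul (r : R) : (Num.sqrt r)^-1 * r = Num.sqrt r.
Proof.
have [r_le0|r_gt0] := lerP r 0.
  by move: r_le0; rewrite -sqrtr_eq0 => /eqP->; rewrite invr0 mul0r.
by rewrite -{2}(sqr_sqrtr (ltW r_gt0)) mulrA mulVf ?mul1r ?sqrtr_eq0 -?ltNge.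
Qed.

Lemma mulVfV (x : R) : x^-1 * x * x^-1 = x^-1.
Proof. by have [->|x_neq0] := eqVneq x 0; rewrite ?invr0 ?mul0r // mulVf ?mul1r. Qed.

(* Polar decomposition: if D†D = U diag(lam) U†, then Y := D U diag(lam^-1/2)
   (reading 0^-1 as 0) is a partial isometry and tr (D U Y†) = Σ_i sqrt (lam i). *)
Lemma trnorm_dual n (D : 'M[C]_n) :
  (exists lam, spectrum_of (adjmx D *m D) lam) ->
  exists2 W, contraction W & (trnorm D)%:C%C = \tr (D *m W).
Proof.
move=> ex; have := xgetPex 0 ex; rewrite /trnorm /eigvals.
set lam := xget _ _ => -[U [/unitarymx_adjK UU DDE]].
have DD : adjmx U *m (adjmx D *m D) *m U = diag_mx (map_mx RC lam).
  by rewrite DDE !mulmxA UU mul1mx -mulmxA UU mulmx1.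
pose sv := \row_i Num.sqrt (lam 0 i); pose sinv := \row_i (sv 0 i)^-1.
have [Y YE] : exists Y, Y = D *m U *m diag_mx (map_mx RC sinv) by eexists.
have YDU : adjmx Y *m D *m U = diag_mx (map_mx RC sv).
  rewrite YE !adjmxM adjmx_diag_real -!mulmxA [adjmx D *m _]mulmxA.
  rewrite [adjmx U *m _]mulmxA DD diag_real_mul; congr (diag_mx (map_mx RC _)).
  by apply/rowP => i; rewrite !mxE invr_sqrt_mul.
exists (U *m adjmx Y).
  apply: partial_isometry_contraction => //.
  rewrite {3}YE !mulmxA -2!(mulmxA Y) YDU YE -!mulmxA !diag_real_mul.
  by congr (_ *m (_ *m diag_mx (map_mx RC _))); apply/rowP => i; rewrite !mxE mulrA mulVfV.
rewrite mulmxA mxtrace_mulC mulmxA YDU mxtrace_diag.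
by rewrite (@rmorph_sum _ _ (complex.real_complex R)); apply: eq_bigr => i _; rewrite !mxE.
Qed.

Lemma trnorm_ge0 n (D : 'M[C]_n) : 0 <= trnorm D.
Proof. by apply: sumr_ge0 => i _; apply: sqrtr_ge0. Qed.

Lemma trnorm_le n (D : 'M[C]_n) (b : R) :
  (forall W, contraction W -> `|\tr (D *m W)| <= b%:C%C) -> trnorm D <= b.
Proof.
move=> Db; have [ex|nex] := pselect (exists lam, spectrum_of (adjmx D *m D) lam).
  have [W /Db trW_le trE] := trnorm_dual ex.
  by move: trW_le; rewrite -trE ger0_norm ?lecR ?trnorm_ge0.
have := Db 0 (@contraction0 n); rewrite mulmx0 mxtrace0 normr0 RC_ge0.
rewrite /trnorm /eigvals xgetPN => [b_ge0|lam ?]; last by apply: nex; exists lam.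
by rewrite big1 // => i _; rewrite mxE sqrtr0.
Qed.

Lemma contraction_form_le1 n (W : 'M[C]_n) (u v : 'I_n -> C) : contraction W ->
  \sum_a `|u a| ^+ 2 <= 1 -> \sum_b `|v b| ^+ 2 <= 1 ->
  `|\sum_a \sum_b u a * (v b)^* * W b a| <= 1.
Proof.
move=> W_contr u_le1 v_le1; set z := W *m \col_a u a.
have -> : \sum_a \sum_b u a * (v b)^* * W b a = \sum_b (v b)^* * z b 0.
  rewrite exchange_big; apply: eq_bigr => b _; rewrite mxE mulr_sumr.
  by apply: eq_bigr => a _; rewrite !mxE; ring.
have z_le1 : \sum_b `|z b 0| ^+ 2 <= 1.
  rewrite -cV_normE; apply: le_trans (W_contr _) _; rewrite cV_normE.
  by under eq_bigr do rewrite mxE.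
apply: le_trans (ler_norm_sum _ _ _) _.
apply: (le_trans (y := \sum_b (`|v b| ^+ 2 + `|z b 0| ^+ 2) / 2)).
  apply: ler_sum => b _; rewrite normrM norm_conjC.
  exact: (real_leif_mean_square (normr_real _) (normr_real _)).
by rewrite -mulr_suml big_split /= ler_pdivrMr // mul1r; apply: lerD.
Qed.

Definition tensor_mx T n (F : 'I_T -> 'M[C]_n) : 'M[C]_(#|{ffun 'I_T -> 'I_n}|) :=
  \matrix_(i, j) \prod_t F t ((enum_val i : {ffun 'I_T -> 'I_n}) t)
                             ((enum_val j : {ffun 'I_T -> 'I_n}) t).

Lemma tensor_stateE (X : finType) n T (rho : X -> 'M[C]_n) (x : 'I_T -> X) :
  tensor_state rho x = tensor_mx (fun t => rho (x t)).
Proof. by []. Qed.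

Lemma tensor_vec_norm_le1 T n (u : 'I_T -> 'I_n -> C) :
  (forall t, \sum_i `|u t i| ^+ 2 <= 1) ->
  \sum_(a < #|{ffun 'I_T -> 'I_n}|)
    `|\prod_t u t ((enum_val a : {ffun 'I_T -> 'I_n}) t)| ^+ 2 <= 1.
Proof.
move=> u_le1; under eq_bigr do rewrite normr_prod -prodrXl.
rewrite -(big_enum_val (fun f : {ffun 'I_T -> 'I_n} => \prod_t `|u t (f t)| ^+ 2)).
rewrite -(bigA_distr_bigA (fun t i => `|u t i| ^+ 2)).
apply: prodr_ile1 => t _; rewrite u_le1 andbT.
by apply: sumr_ge0 => i _; apply: exprn_ge0.
Qed.

Section TensorTrace.
Variables (T n : nat) (K : finType) (F : 'I_T -> 'M[C]_n).
Variables (c : 'I_T -> K -> C) (p q : 'I_T -> K -> 'I_n -> C).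
Hypothesis decF : forall t, rank1_decomp (F t) (c t) (p t) (q t).
Local Notation ev i := (enum_val i : {ffun 'I_T -> 'I_n}).

Lemma tensor_mx_expand a b : tensor_mx F a b =
  \sum_(kk : {ffun 'I_T -> K}) (\prod_t c t (kk t)) *
     (\prod_t p t (kk t) (ev a t)) * (\prod_t q t (kk t) (ev b t))^*.
Proof.
have Fdec t i j : F t i j = \sum_k c t k * p t k i * (q t k j)^* by case: (decF t).
rewrite mxE; under eq_bigr do rewrite Fdec.
rewrite bigA_distr_bigA; apply: eq_bigr => kk _.
by rewrite rmorph_prod -!big_split.
Qed.

Lemma tensor_mx_trace_le W : contraction W ->
  `|\tr (tensor_mx F *m W)| <= \prod_t \sum_k `|c t k|.
Proof.
move=> W_contr.
have -> : \tr (tensor_mx F *m W) = \sum_(kk : {ffun 'I_T -> K}) (\prod_t c t (kk t)) *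
    \sum_a \sum_b (\prod_t p t (kk t) (ev a t)) * (\prod_t q t (kk t) (ev b t))^* * W b a.
  rewrite /mxtrace; under eq_bigr do rewrite mxE.
  under eq_bigr do under eq_bigr do rewrite tensor_mx_expand mulr_suml.
  under eq_bigr do rewrite exchange_big.
  rewrite exchange_big; apply: eq_bigr => kk _; rewrite mulr_sumr.
  apply: eq_bigr => a _; rewrite mulr_sumr; apply: eq_bigr => b _.
  by rewrite !mulrA.
apply: le_trans (ler_norm_sum _ _ _) _.
rewrite (bigA_distr_bigA (fun t k => `|c t k|)); apply: ler_sum => kk _.
rewrite normrM normr_prod; apply: ler_piMr; first by apply: prodr_ge0.
apply: contraction_form_le1 => //.
  by apply: (@tensor_vec_norm_le1 _ _ (fun t => p t (kk t))) => t; case: (decF t).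
by apply: (@tensor_vec_norm_le1 _ _ (fun t => q t (kk t))) => t; case: (decF t).
Qed.

End TensorTrace.

Lemma entry_rank1_decomp n (D : 'M[C]_n) :
  rank1_decomp D (fun k : 'I_n * 'I_n => D k.1 k.2)
    (fun k i => (i == k.1)%:R) (fun k i => (i == k.2)%:R).
Proof.
have delta_le1 (l : 'I_n) : \sum_i `|(i == l)%:R : C| ^+ 2 <= 1.
  rewrite (bigD1 l) //= eqxx normr1 expr1n big1 ?addr0 // => i /negbTE->.
  by rewrite normr0 expr0n.
split=> [i j|k|k]; rewrite ?delta_le1 //.
rewrite -(pair_bigA _ (fun a b => D a b * (i == a)%:R * ((j == b)%:R)^*)) /=.
rewrite {1}[D]matrix_sum_delta summxE; apply: eq_bigr => a _.
rewrite summxE; apply: eq_bigr => b _.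
by rewrite !mxE rmorph_nat -mulrA -natrM mulnb.
Qed.

Definition hybrid (V : Type) T (s t : 'I_T) (x y z : V) : V :=
  if (t < s)%N then x else if t == s then y else z.

Lemma prod_telescope T (f g : 'I_T -> C) :
  \prod_t f t - \prod_t g t = \sum_s \prod_t hybrid s t (f t) (f t - g t) (g t).
Proof.
elim: T f g => [|T IH] f g; first by rewrite !big_ord0 subrr.
pose f' t := f (lift ord0 t); pose g' t := g (lift ord0 t).
have shift s : \prod_(t < T.+1) hybrid (lift ord0 s) t (f t) (f t - g t) (g t) =
    f ord0 * \prod_t hybrid s t (f' t) (f' t - g' t) (g' t).
  by rewrite big_ord_recl; congr (_ * _).
have head : \prod_(t < T.+1) hybrid ord0 t (f t) (f t - g t) (g t) =
    (f ord0 - g ord0) * \prod_t g' t.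
  by rewrite big_ord_recl.
rewrite [\sum_(s < T.+1) _]big_ord_recl head (eq_bigr _ (fun s _ => shift s)).
by rewrite -mulr_sumr -IH (big_ord_recl T f) (big_ord_recl T g); ring.
Qed.

Lemma tensor_mx_telescope T n (A B : 'I_T -> 'M[C]_n) :
  tensor_mx A - tensor_mx B =
  \sum_s tensor_mx (fun t => hybrid s t (A t) (A t - B t) (B t)).
Proof.
apply/matrixP => i j; rewrite mxBE summxE !mxE prod_telescope.
apply: eq_bigr => s _; rewrite mxE; apply: eq_bigr => t _.
by rewrite /hybrid; case: ifP => _; [|case: ifP => _; rewrite ?mxBE].
Qed.

Lemma hybrid_tensor_trace_le T n (A B : 'I_T -> 'M[C]_n) s W :
  (forall t, density (A t)) -> (forall t, density (B t)) -> contraction W ->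
  `|\tr (tensor_mx (fun t => hybrid s t (A t) (A t - B t) (B t)) *m W)| <=
  \sum_(k : 'I_n * 'I_n) `|(A s - B s) k.1 k.2|.
Proof.
move=> densA densB W_contr.
have dec (M : 'I_T -> 'M[C]_n) : (forall t, density (M t)) ->
    {cp : 'I_T -> ('I_n * 'I_n -> C) * ('I_n * 'I_n -> 'I_n -> C) &
    forall t, rank1_decomp (M t) (cp t).1 (cp t).2 (cp t).2 /\ \sum_k `|(cp t).1 k| = 1}.
  move=> densM; apply: (@choice _ _ (fun t cp =>
    rank1_decomp (M t) cp.1 cp.2 cp.2 /\ \sum_k `|cp.1 k| = 1)) => t.
  by have [c [p ?]] := density_rank1_decomp (densM t); exists (c, p).
have [[cpA decA] [cpB decB]] := (dec A densA, dec B densB).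
pose c t := hybrid s t (cpA t).1 (fun k => (A t - B t) k.1 k.2) (cpB t).1.
pose p t := hybrid s t (cpA t).2 (fun k i => (i == k.1)%:R) (cpB t).2.
pose q t := hybrid s t (cpA t).2 (fun k i => (i == k.2)%:R) (cpB t).2.
apply: le_trans (tensor_mx_trace_le (c := c) (p := p) (q := q) _ W_contr) _.
  move=> t; rewrite /c /p /q /hybrid.
  by case: ifP => _; [|case: ifP => _]; [case: (decA t)|exact: entry_rank1_decomp|case: (decB t)].
rewrite (bigD1 s) //= [X in _ * X]big1 ?mulr1; first by rewrite /c /hybrid ltnn eqxx.
move=> t /negbTE t_neq_s; rewrite /c /hybrid t_neq_s.
by case: ifP => _; [case: (decA t)|case: (decB t)].
Qed.

Lemma trnorm_tensor_diff_le T n (A B : 'I_T -> 'M[C]_n) (eps : R) :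
  (forall t, density (A t)) -> (forall t, density (B t)) ->
  (forall t i j, `|A t i j - B t i j| <= eps%:C%C) ->
  trnorm (tensor_mx A - tensor_mx B) <= eps *+ (n ^ 2 * T).
Proof.
move=> densA densB AB_close; apply: trnorm_le => W W_contr.
rewrite tensor_mx_telescope mulmx_suml raddf_sum /=.
apply: le_trans (ler_norm_sum _ _ _) _.
apply: le_trans (ler_sum _ (fun s _ => hybrid_tensor_trace_le s densA densB W_contr)) _.
rewrite (rmorphMn (complex.real_complex R)) mulrnA -[T in _ *+ T]card_ord -sumr_const.
apply: ler_sum => s _.
have -> : (n ^ 2 = #|{: 'I_n * 'I_n}|)%N by rewrite card_prod card_ord mulnn.
rewrite -sumr_const.
by apply: ler_sum => k _; rewrite mxBE.
Qed.

Lemma Re_conj (z : C) : complex.Re z^* = complex.Re z.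
Proof. by case: z. Qed.

Lemma Im_conj (z : C) : complex.Im z^* = - complex.Im z.
Proof. by case: z. Qed.

Lemma Im_norm_le (z : C) : `|complex.Im z|%:C%C <= `|z|.
Proof.
have := normc_ge_Re (z * 'i%C); rewrite ReiNIm normrN normrM.
by rewrite [`|'i%C|]normCi mulr1.
Qed.

Lemma norm_le_ReIm (z : C) : `|z| <= (`|complex.Re z| + `|complex.Im z|)%:C%C.
Proof.
rewrite normc_def lecR -[X in _ <= X]ger0_norm ?addr_ge0 // -sqrtr_sqr.
rewrite ler_sqrt ?sqr_ge0 // sqrrD -(real_normK (num_real (complex.Re z))).
rewrite -(real_normK (num_real (complex.Im z))) -addrA lerD2l addrC lerDl.
by rewrite mulrn_wge0 // mulr_ge0.
Qed.

Definition quantize (M : nat) (r : R) : 'I_(2 * M).+1 :=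
  inord (Num.truncn ((r + 1) * M%:R)).

Lemma quantize_close M (r r' : R) : (0 < M)%N -> `|r| <= 1 -> `|r'| <= 1 ->
  quantize M r = quantize M r' -> `|r - r'| <= M%:R^-1.
Proof.
move=> M_gt0 r_le1 r'_le1; have M_ge0 := ler0n R M.
have scaled_ge0 (s : R) : `|s| <= 1 -> 0 <= (s + 1) * M%:R.
  by rewrite ler_norml => /andP[s_ge _]; rewrite mulr_ge0 // -lerBlDr sub0r.
have scaled_lt (s : R) : `|s| <= 1 -> (Num.truncn ((s + 1) * M%:R) < (2 * M).+1)%N.
  rewrite ler_norml => /andP[_ s_le1].
  by rewrite ltnS truncn_le_nat -natr1 natrM; nra.
move=> /(congr1 val); rewrite /= !inordK ?scaled_lt // => eq_trunc.
have := truncn_itv (scaled_ge0 _ r_le1); have := truncn_itv (scaled_ge0 _ r'_le1).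
rewrite eq_trunc => /andP[lo' hi'] /andP[lo hi].
rewrite -div1r ler_pdivlMr ?ltr0n // -[X in _ * X]ger0_norm //.
by rewrite -normrM mulrBl ler_norml; apply/andP; split; lra.
Qed.

Definition herm_coord n (A : 'M[C]_n) (i j : 'I_n) : R :=
  if (i <= j)%N then complex.Re (A i j) else complex.Im (A i j).

(* A Hermitian matrix is determined by the [n ^ 2] real numbers [herm_coord],
   which keeps the number of keys at [(2 M + 1) ^ (n ^ 2)]. *)
Definition herm_key M n (A : 'M[C]_n) : {ffun 'I_n * 'I_n -> 'I_(2 * M).+1} :=
  [ffun ij => quantize M (herm_coord A ij.1 ij.2)].

Section DensityEntries.
Variables (n : nat) (A : 'M[C]_n).
Hypothesis densA : density A.

Lemma density_Re_sym i j : complex.Re (A j i) = complex.Re (A i j).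
Proof. by rewrite -(psdmx_herm densA.1 i j) Re_conj. Qed.

Lemma density_Im_sym i j : complex.Im (A j i) = - complex.Im (A i j).
Proof. by rewrite -(psdmx_herm densA.1 i j) Im_conj opprK. Qed.

Lemma density_Im_diag i : complex.Im (A i i) = 0.
Proof.
apply/eqP; rewrite -[_ == 0](mulrn_eq0 _ 2) mulr2n.
by rewrite {2}density_Im_sym subrr.
Qed.

Lemma herm_coord_le1 i j : `|herm_coord A i j| <= 1.
Proof.
rewrite -lecR; apply: le_trans (density_entry_le1 densA i j).
by rewrite /herm_coord; case: ifP => _; [apply: normc_ge_Re | apply: Im_norm_le].
Qed.

End DensityEntries.

Lemma herm_key_close M n (A B : 'M[C]_n) : (0 < M)%N -> density A -> density B ->
  herm_key M A = herm_key M B -> forall i j, `|A i j - B i j| <= (2 / M%:R)%:C%C.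
Proof.
move=> M_gt0 densA densB keyAB.
have coord i j : `|herm_coord A i j - herm_coord B i j| <= M%:R^-1.
  apply: quantize_close; rewrite ?herm_coord_le1 //.
  have := congr1 (fun k : {ffun 'I_n * 'I_n -> 'I_(2 * M).+1} => k (i, j)) keyAB.
  by rewrite !ffunE.
have ReC i j : `|complex.Re (A i j) - complex.Re (B i j)| <= M%:R^-1.
  have [le_ij|lt_ji] := leqP i j; first by have := coord i j; rewrite /herm_coord le_ij.
  have := coord j i; rewrite /herm_coord ltnW //.
  by rewrite (density_Re_sym densA) (density_Re_sym densB).
have ImC i j : `|complex.Im (A i j) - complex.Im (B i j)| <= M%:R^-1.
  have [lt_ij|lt_ji|/val_inj->] := ltngtP i j.
  - have := coord j i; rewrite /herm_coord leqNgt lt_ij /=.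
    by rewrite (density_Im_sym densA) (density_Im_sym densB) -opprD normrN.
  - by have := coord i j; rewrite /herm_coord leqNgt lt_ji.
  - by rewrite !density_Im_diag // subrr normr0 invr_ge0 ler0n.
move=> i j; apply: le_trans (norm_le_ReIm _) _.
rewrite lecR (raddfB (@complex.Re R)) (raddfB (@complex.Im R)) mulr2n mulrDl mul1r.
exact: lerD (ReC i j) (ImC i j).
Qed.

End Quantum.

Lemma finite_net (Theta : Type) (K : finType) (key : Theta -> K) :
  exists (S : finType) (rep : S -> Theta),
    (#|S| <= #|K|)%N /\ forall th, exists s, key (rep s) = key th.
Proof.
pose S := {k : K | `[< exists th, key th = k >]}.
pose rep (s : S) := projT1 (cid (asboolW (valP s))).
have repP s : key (rep s) = val s by rewrite /rep; case: cid.
exists S, rep; split; first by rewrite card_sig max_card.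
move=> th; have hit : `[< exists th', key th' = key th >] by apply/asboolP; exists th.
by exists (exist _ (key th) hit); rewrite repP.
Qed.

Lemma card_keys_le (m e T x : nat) : (0 < m)%N -> (0 < T)%N ->
  (((2 * (m * T ^ 6)).+1 ^ e) ^ x <= ((3 * m) ^ e) ^ x * T ^ (6 * x * e))%N.
Proof.
move=> m_gt0 T_gt0.
have step : ((2 * (m * T ^ 6)).+1 <= 3 * m * T ^ 6)%N.
  have : (0 < m * T ^ 6)%N by rewrite muln_gt0 expn_gt0 m_gt0 T_gt0.
  by rewrite -mulnA; lia.
have -> : (((3 * m) ^ e) ^ x * T ^ (6 * x * e) = (3 * m * T ^ 6) ^ (e * x))%N.
  by rewrite [RHS]expnMn -!expnM; congr (_ * T ^ _)%N; ring.
by rewrite -expnM; case: (e * x)%N => [|k] //; rewrite leq_exp2r.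
Qed.

Lemma grid_error_le (R : realType) (m e T : nat) : (2 * e < m)%N -> (0 < T)%N ->
  (2 / (m * T ^ 6)%:R) *+ (e * T) <= T%:R ^- 5 :> R.
Proof.
move=> em T_gt0; rewrite -mulr_natr natrM natrX (natrM _ e T).
have t_gt0 : (0 : R) < T%:R by rewrite ltr0n.
have m_gt0 : (0 : R) < m%:R by rewrite ltr0n (leq_ltn_trans _ em).
have em_le1 : 2 * e%:R / m%:R <= 1 :> R.
  by rewrite ler_pdivrMr // mul1r -natrM ler_nat ltnW.
move: t_gt0 m_gt0 em_le1; move: (T%:R) (m%:R) => t m' t_gt0 m_gt0 em_le1.
have -> : 2 / (m' * t ^+ 6) * (e%:R * t) = (2 * e%:R / m') * t ^- 5.
  by field; rewrite ?gt_eqF ?exprn_gt0.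
by apply: ler_piMl; rewrite // invr_ge0 exprn_ge0 // ltW.
Qed.

Lemma ln_pow_ge0 (R : realType) (T d : nat) : (0 < T)%N -> 0 <= ln (T%:R ^+ 6 * d%:R : R).
Proof.
move=> T_gt0; case: d => [|d]; first by rewrite mulr0 ln0.
by rewrite ln_ge0 // mulr_ege1 ?exprn_ege1 // ler1n.
Qed.

Unset Implicit Arguments.

Theorem lemma6 (R : realType) (d : nat) :
  exists K : R, 0 < K /\
  forall (X : finType) (Theta : Type) (rho : Theta -> X -> 'M[R[i]]_d),
  (forall th x, density (rho th x)) ->
  forall T : nat, (1 <= T)%N ->
  exists (Thetat : finType) (rhot : Thetat -> X -> 'M[R[i]]_d),
    (forall tht x, density (rhot tht x)) /\
    (* (1) *)
    (#|Thetat|%:R <= K ^+ #|X| * T%:R ^+ (6 * #|X| * d ^ 2)) /\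
    (* (2) *)
    (forall th : Theta, exists tht : Thetat, forall x : 'I_T -> X,
        trnorm (tensor_state (rho th) x - tensor_state (rhot tht) x)
        <= T%:R ^- 5) /\
    (* (3) *)
    (forall P : X -> R, pmf P ->
       forall tht : Thetat,
         holevo P (rhot tht) >=
         inf [set holevo P (rho th) | th in [set: Theta]]
         - 2 * T%:R ^- 6 * ln (T%:R ^+ 6 * d%:R)).
Proof.
pose m := (2 * d ^ 2).+1; exists ((3 * m) ^ d ^ 2)%:R.
split=> [|X Theta rho dens T T_gt0]; first by rewrite ltr0n expn_gt0.
pose M := (m * T ^ 6)%N; have M_gt0 : (0 < M)%N by rewrite muln_gt0 expn_gt0 T_gt0.
have [S [rep [card_S repP]]] := finite_net (fun th => [ffun x => herm_key M (rho th x)]).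
exists S, (rho \o rep); split=> [s x|]; first exact: dens.
split; [|split].
- rewrite -!natrX -natrM ler_nat; apply: leq_trans card_S _.
  by rewrite !card_ffun card_prod !card_ord mulnn card_keys_le.
- move=> th; have [s key_eq] := repP th; exists s => x.
  rewrite !tensor_stateE; apply: le_trans (grid_error_le R (ltnSn _) T_gt0).
  apply: trnorm_tensor_diff_le => [t|t|t]; try exact: dens.
  apply: (herm_key_close M_gt0); try exact: dens.
  have := congr1 (fun k : {ffun X -> _} => k (x t)) key_eq.
  by rewrite !ffunE => /esym key_xt; exact: key_xt.
- move=> P PP s; apply: le_trans _ (holevo_ge_inf PP dens (rep s)).
  by rewrite lerBlDr lerDl mulr_ge0 ?ln_pow_ge0 ?mulr_ge0 ?invr_ge0 ?exprn_ge0.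
Qed.
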